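(* Let $X$ be a topological space and let $\mathcal P$ be a ring of open subsets of $X$ (closed under finite unions and finite intersections) which is closed under a winning strategy for Player I in the open-open game on $X$ and satisfies $\mathcal P\subseteq\mathcal P_{seq}$. Then $X/\mathcal P$ with the $\mathcal Q_{\mathcal P}$-topology is a completely regular space and the $\mathcal Q_{\mathcal P}$-map $q:X\to X/\mathcal P$ is skeletal.
   Context: For a family $\mathcal P$ of subsets of $X$: $[x]_{\mathcal P}=\{y: \forall V\in\mathcal P\ (x\in V\iff y\in V)\}$, $X/\mathcal P=\{[x]_{\mathcal P}:x\in X\}$, $q(x)=[x]_{\mathcal P}$ is the $\mathcal Q_{\mathcal P}$-map, and the $\mathcal Q_{\mathcal P}$-topology is the coarsest topology on $X/\mathcal P$ containing all $q[V]$, $V\in\mathcal P$. $\mathcal P_{seq}$ is the family of all sets $W$ for which there exist $\{U_n\}_{n\in\omega},\{V_n\}_{n\in\omega}\subseteq\mathcal P$ with $U_k\subseteq X\setminus V_k\subseteq U_{k+1}$ for all $k$ and $\bigcup_nU_n=W$. Open-open game: at inning $n$ Player I picks a non-empty open $A_n$, Player II a non-empty open $B_n\subseteq A_n$; Player I wins if $\bigcup_nB_n$ is dense. A strategy $\sigma$ for Player I assigns a non-empty open set to each finite sequence of non-empty open sets; it is winning if Player I wins every play with $A_0=\sigma(\emptyset)$, $A_{n+1}=\sigma(B_0,\dots,B_n)$. $\mathcal P$ is closed under $\sigma$ if $\sigma(\emptyset)\in\mathcal P$ and $\sigma(B_0,\dots,B_n)\in\mathcal P$ whenever $B_0,\dots,B_n$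 are non-empty members of $\mathcal P$. A continuous surjection $f$ is skeletal if for every non-empty open $U$ the closure of $f[U]$ has non-empty interior. *)

From HB Require Import structures.
From mathcomp Require Import all_boot all_order all_algebra.
From mathcomp Require Import all_classical all_reals topology.
From mathcomp Require Import Rstruct Rstruct_topology.
From Stdlib Require Import Reals.

Set Implicit Arguments.
Unset Strict Implicit.
Unset Printing Implicit Defensive.

Local Open Scope classical_set_scope.

Section Defs.
Context {X : topologicalType}.

Definition cls (P : set (set X)) (x : X) : set X :=
  [set y | forall V, P V -> (V x <-> V y)].

Definition quot (P : set (set X)) : Type := {A : set X | exists x, A = cls P x}.

Definition qmap (P : set (set X)) (x : X) : quot P :=
  exist _ (cls P x) (ex_intro _ x erefl).

Definition is_topology {Y : Type} (O : set (set Y)) : Prop :=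
  O setT /\ (forall A B, O A -> O B -> O (A `&` B)) /\
  (forall F : set (set Y), F `<=` O -> O (\bigcup_(A in F) A)).

Definition gen_topology {Y : Type} (S : set (set Y)) : set (set Y) :=
  fun A => forall O, is_topology O -> S `<=` O -> O A.

Definition QP_topology (P : set (set X)) : set (set (quot P)) :=
  gen_topology [set qmap P @` V | V in P].

Definition completely_regular {Y : Type} (O : set (set Y)) : Prop :=
  forall (F : set Y) (p : Y), O (~` F) -> ~ F p ->
    exists f : Y -> R,
      (forall A : set R, open A -> O (f @^-1` A)) /\
      (forall y, (0 <= f y <= 1)%R) /\ f p = 0%R /\
      (forall y, F y -> f y = 1%R).

Definition closure_in {Y : Type} (O : set (set Y)) (A : set Y) : set Y :=
  [set y | forall W, O W -> W y -> W `&` A !=set0].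

Definition interior_in {Y : Type} (O : set (set Y)) (A : set Y) : set Y :=
  \bigcup_(W in [set W | O W /\ W `<=` A]) W.

Definition skeletal {Y : Type} (O : set (set Y)) (f : X -> Y) : Prop :=
  (forall W, O W -> open (f @^-1` W)) /\
  (forall y, exists x, f x = y) /\
  (forall U : set X, open U -> U !=set0 ->
     interior_in O (closure_in O (f @` U)) !=set0).

Definition ring_of_open_sets (P : set (set X)) : Prop :=
  (forall V, P V -> open V) /\
  (forall U V, P U -> P V -> P (U `|` V)) /\
  (forall U V, P U -> P V -> P (U `&` V)).

Definition Pseq (P : set (set X)) : set (set X) :=
  [set W | exists U V : nat -> set X,
     (forall n, P (U n)) /\ (forall n, P (V n)) /\
     (forall k, U k `<=` ~` V k /\ ~` V k `<=` U k.+1) /\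
     \bigcup_n U n = W].

Definition nonempty_open (A : set X) : Prop := open A /\ A !=set0.

Definition strategyI (sigma : seq (set X) -> set X) : Prop :=
  forall s : seq (set X), (forall B, B \in s -> nonempty_open B) ->
    nonempty_open (sigma s).

Definition play_by (sigma : seq (set X) -> set X)
  (A B : nat -> set X) : Prop :=
  A 0 = sigma [::] /\
  (forall n, A n.+1 = sigma [seq B i | i <- iota 0 n.+1]) /\
  (forall n, nonempty_open (B n) /\ B n `<=` A n).

Definition winning_strategyI (sigma : seq (set X) -> set X) : Prop :=
  strategyI sigma /\
  forall A B, play_by sigma A B -> dense (\bigcup_n B n).

Definition closed_under (P : set (set X)) (sigma : seq (set X) -> set X) : Prop :=
  P (sigma [::]) /\
  forall s : seq (set X), s != [::] ->
    (forall B, B \in s -> P B /\ B !=set0) -> P (sigma s).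

End Defs.
Arguments qmap {X} P x.
Arguments cls {X} P x.
Arguments quot {X} P.
Arguments QP_topology {X} P.
Arguments Pseq {X} P.
Arguments ring_of_open_sets {X} P.
Arguments closed_under {X} P sigma.

From Stdlib Require Import Reals Lra Lia Cantor.
From mathcomp Require Import all_boot.
From mathcomp Require Import all_classical all_reals topology normedtype.
From mathcomp Require Import Rstruct Rstruct_topology.
From mathcomp Require Import zify.

(* Let B be the family of the sets q[V], V in P.  As P is a ring of open
   sets, B is closed under finite unions and intersections, and P <= P_seq
   makes every member of B an increasing union of members q[U_n], each lying
   inside the closed set ~q[V_n], which is in turn inside the union.  Countable
   unions of members of B then satisfy the interpolation property of a normal
   space, which is all that Urysohn's dyadic construction uses; run inside this
   sigma-lattice it separates a point from the complement of a basic set by a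
   continuous function, so X/P is completely regular.

   For skeletality: if every non-empty V in P contained a non-empty member of
   P missing a given non-empty open U, Player II could answer each move of the
   winning strategy inside such a member and the union of the answers would
   miss U.  So some non-empty V in P has all its non-empty P-subsets meeting U,
   and q[V] lies in the closure of q[U]. *)

Set Implicit Arguments.
Unset Strict Implicit.
Local Open Scope classical_set_scope.

Lemma setU_eqT_cases (T : Type) (A C : set T) x : A `|` C = setT -> A x \/ C x.
Proof. by move=> ACT; rewrite -[_ \/ _]/((A `|` C) x) ACT. Qed.

Section generated_topology.
Variables (Y : Type) (S : set (set Y)).

Lemma gen_topology_is_topology : is_topology (gen_topology S).
Proof.
split; [|split].
- by move=> O [].
- move=> A B oA oB O hO SO; case: (hO) => _ [+ _].
  by apply; [apply: oA|apply: oB].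
- by move=> F hF O hO hS; case: (hO) => _ [_]; apply => A /hF; apply.
Qed.

Lemma gen_topology_sub b : S b -> gen_topology S b.
Proof. by move=> Sb O _; apply. Qed.

Lemma gen_topologyT : gen_topology S setT.
Proof. by case: gen_topology_is_topology. Qed.

Lemma gen_topologyI A B :
  gen_topology S A -> gen_topology S B -> gen_topology S (A `&` B).
Proof. by case: gen_topology_is_topology => _ [+ _]; apply. Qed.

Lemma gen_topology_bigcup F :
  F `<=` gen_topology S -> gen_topology S (\bigcup_(A in F) A).
Proof. by case: gen_topology_is_topology => _ [_]; apply. Qed.

Lemma gen_topology_local W :
  (forall y, W y -> exists2 A, gen_topology S A & A y /\ A `<=` W) ->
  gen_topology S W.
Proof.
move=> Wloc.
have -> : W = \bigcup_(A in [set A | gen_topology S A /\ A `<=` W]) A.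
  apply/seteqP; split => [y /Wloc [A oA [Ay AW]]|y [A [_ AW] /AW //]].
  by exists A.
by apply: gen_topology_bigcup => A [].
Qed.

Lemma gen_topology_countable_union (s : nat -> set Y) :
  (forall n, S (s n)) -> gen_topology S (\bigcup_n s n).
Proof.
move=> Ss; apply: gen_topology_local => y [n _ sny].
by exists (s n); [exact: gen_topology_sub|split => // z snz; exists n].
Qed.

Hypothesis SI : forall a b, S a -> S b -> S (a `&` b).

(* [setT] is open even when [S] does not cover [Y]. *)
Lemma gen_topology_basis W : gen_topology S W ->
  W = setT \/ forall y, W y -> exists b, S b /\ b y /\ b `<=` W.
Proof.
move=> oW; apply: (oW (fun W => W = setT \/
  forall y, W y -> exists b, S b /\ b y /\ b `<=` W)); last first.
  by move=> b Sb /=; right => y b_y; exists b; split => //; split.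
split; [by left|split].
- move=> A B [->|Aloc]; first by rewrite setTI.
  move=> [->|Bloc]; first by rewrite setIT; right.
  right => y [Ay By].
  have [a [Sa [ay aA]]] := Aloc y Ay; have [b [Sb [b_y bB]]] := Bloc y By.
  by exists (a `&` b); split; [exact: SI|split => // z [/aA ? /bB ?]].
- move=> F hF.
  have [[A FA AT]|noT] := pselect (exists2 A, F A & A = setT).
    by left; apply/seteqP; split => // y _; exists A => //; rewrite AT.
  right => y [A FA Ay]; case: (hF A FA) => [AT|Aloc].
    by exfalso; apply: noT; exists A.
  have [b [Sb [b_y bA]]] := Aloc y Ay.
  by exists b; split => //; split => // z /bA Az; exists A.
Qed.

End generated_topology.

Lemma even_or_odd k : exists i, k = i.*2 \/ k = i.*2.+1.
Proof.
exists k./2; have := odd_double_half k.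
by case: (odd k) => /= kE; [right|left]; rewrite -{1}kE.
Qed.

Section real_facts.
Local Open Scope R_scope.

Lemma INR_expn2 n : INR (2 ^ n) = 2 ^ n.
Proof. by elim: n => // n IH; rewrite expnS mulnE mult_INR IH. Qed.

Lemma INR_double k : INR k.*2 = 2 * INR k.
Proof. by rewrite -addnn -plusE plus_INR /=; lra. Qed.

Lemma INR_leq (a b : nat) : (a <= b)%N -> INR a <= INR b.
Proof. by move=> ab; apply: le_INR; apply/leP. Qed.

Lemma inv_pow2_gt0 n : 0 < / 2 ^ n.
Proof. by apply: Rinv_0_lt_compat; apply: pow_lt; lra. Qed.

Lemma inv_pow2S n : / 2 ^ n.+1 = / 2 ^ n / 2.
Proof. by rewrite /= Rinv_mult /Rdiv Rmult_comm. Qed.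

Lemma inv_pow2_small e : 0 < e -> exists n, / 2 ^ n < e.
Proof.
move=> e_gt0; have half_lt1 : Rabs (/ 2) < 1 by rewrite Rabs_pos_eq; lra.
have [n ns] := pow_lt_1_zero _ half_lt1 _ e_gt0.
exists n; have := ns n (Nat.le_refl _).
rewrite Rabs_pos_eq; first by rewrite pow_inv.
by apply: pow_le; lra.
Qed.

Lemma open_Rabs_ball (A : set R) (y : R) : open A -> A y ->
  exists2 e, 0 < e & forall z, Rabs (z - y) < e -> A z.
Proof.
move=> oA Ay; have /nbhs_ballP [e e0 eA] : nbhs y A by apply: open_nbhs_nbhs.
exists e; first by apply/RltP.
move=> z yz; apply: eA; rewrite /ball /= -RabsE.
by apply/RltP; rewrite Rabs_minus_sym.
Qed.

End real_facts.

Section sigma_lattice.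
Variables (Y : Type) (B : set (set Y)).

Definition sigma_union (b : set Y) :=
  exists s : nat -> set Y, (forall n, B (s n)) /\ b = \bigcup_n s n.

(* The complement of [v n] plays the role of a closed set between [u n] and
   [b]. *)
Definition separated_union (b : set Y) :=
  exists u v : nat -> set Y, (forall n, B (u n)) /\ (forall n, B (v n)) /\
    b = \bigcup_n u n /\ (forall n, u n `&` v n = set0) /\
    (forall n, v n `|` b = setT).

Lemma sigma_union_of b : B b -> sigma_union b.
Proof.
move=> Bb; exists (fun=> b); split => //.
by apply/seteqP; split => [y by_|y [_ _ //]]; exists 0%N.
Qed.

Lemma sigma_union_open b : sigma_union b -> gen_topology B b.
Proof. by case=> s [Bs ->]; exact: gen_topology_countable_union. Qed.

Hypothesis BI : forall a b, B a -> B b -> B (a `&` b).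
Hypothesis BU : forall a b, B a -> B b -> B (a `|` b).
Hypothesis B_separated : forall b, B b -> separated_union b.

Lemma sigma_union_separated b : sigma_union b -> separated_union b.
Proof.
case=> s [Bs ->].
have /choice [uv uvP] : forall n, exists uv : (nat -> set Y) * (nat -> set Y),
    (forall m, B (uv.1 m)) /\ (forall m, B (uv.2 m)) /\
    s n = \bigcup_m uv.1 m /\ (forall m, uv.1 m `&` uv.2 m = set0) /\
    (forall m, uv.2 m `|` s n = setT).
  by move=> n; have [u [v ?]] := B_separated (Bs n); exists (u, v).
pose u k := let p := Cantor.of_nat k in (uv p.1).1 p.2.
pose v k := let p := Cantor.of_nat k in (uv p.1).2 p.2.
exists u, v; split; [|split; [|split; [|split]]].
- by move=> k; rewrite /u; case: (uvP (Cantor.of_nat k).1).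
- by move=> k; rewrite /v; case: (uvP (Cantor.of_nat k).1) => _ [].
- apply/seteqP; split => y /=.
    case=> n _; case: (uvP n) => _ [_ [-> _]] [m _ hm].
    by exists (Cantor.to_nat (n, m)) => //; rewrite /u Cantor.cancel_of_to.
  case=> k _; rewrite /u => hk; exists (Cantor.of_nat k).1 => //.
  case: (uvP (Cantor.of_nat k).1) => _ [_ [-> _]].
  by exists (Cantor.of_nat k).2.
- by move=> k; rewrite /u /v; case: (uvP (Cantor.of_nat k).1) => _ [_ [_ []]].
- move=> k; rewrite /v; case: (uvP (Cantor.of_nat k).1) => _ [_ [_ [_ vs]]].
  apply/seteqP; split => // y _.
  case: (setU_eqT_cases y (vs (Cantor.of_nat k).2)) => [vy|sy]; first by left.
  by right; exists (Cantor.of_nat k).1.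
Qed.

Fixpoint prefix_union (a : nat -> set Y) m :=
  if m is m'.+1 then prefix_union a m' `|` a m else a 0.
Fixpoint prefix_inter (a : nat -> set Y) m :=
  if m is m'.+1 then prefix_inter a m' `&` a m else a 0.

Lemma prefix_unionP a m y :
  prefix_union a m y <-> exists2 i, (i <= m)%N & a i y.
Proof.
elim: m => [|m IH] /=; first by split; [exists 0%N|case=> -[]].
split=> [[/IH [i im aiy]|amy]|[i]]; first by exists i => //; exact: leqW.
  by exists m.+1.
rewrite leq_eqVlt => /orP [/eqP -> amy|im aiy]; first by right.
by left; apply/IH; exists i.
Qed.

Lemma prefix_interP a m y :
  prefix_inter a m y <-> forall i, (i <= m)%N -> a i y.
Proof.
elim: m => [|m IH] /=; first by split => [a0y [|i] //|]; apply.
split=> [[/IH ay amy] i|ay]; first by rewrite leq_eqVlt => /orP [/eqP ->|/ay].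
by split; [apply/IH => i im; apply: ay; exact: leqW|apply: ay].
Qed.

Lemma prefix_union_in a m : (forall n, B (a n)) -> B (prefix_union a m).
Proof. by move=> Ba; elim: m => //= m IH; apply: BU. Qed.

Lemma prefix_inter_in a m : (forall n, B (a n)) -> B (prefix_inter a m).
Proof. by move=> Ba; elim: m => //= m IH; apply: BI. Qed.

Lemma prefix_union_inter_disjoint a c m k : (m <= k)%N ->
  (forall n, a n `&` c n = set0) ->
  prefix_union a m `&` prefix_inter c k = set0.
Proof.
move=> mk ac; apply/seteqP; split => // y.
move=> [/prefix_unionP [i im ay] /prefix_interP cy].
by rewrite -(ac i); split => //; apply: cy; exact: leq_trans mk.
Qed.

Definition staircase (a c : nat -> set Y) :=
  \bigcup_m (prefix_union a m `&` prefix_inter c m).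

Lemma staircase_sigma a c : (forall n, B (a n)) -> (forall n, B (c n)) ->
  sigma_union (staircase a c).
Proof.
move=> Ba Bc; exists (fun m => prefix_union a m `&` prefix_inter c m).
by split => // m; apply: BI; [exact: prefix_union_in|exact: prefix_inter_in].
Qed.

Lemma staircase_disjoint a c a' c' :
  (forall n, a n `&` c' n = set0) -> (forall n, a' n `&` c n = set0) ->
  staircase a c `&` staircase a' c' = set0.
Proof.
move=> ac' a'c; apply/seteqP; split => // y [[m _ [a_y c_y]] [k _ [a'y c'y]]].
case: (leqP m k) => mk.
  by rewrite -(prefix_union_inter_disjoint mk ac'); split.
by rewrite -(prefix_union_inter_disjoint (ltnW mk) a'c); split.
Qed.

Lemma staircase_cover a c b e : b = \bigcup_n a n ->
  (forall n, c n `|` e = setT) -> b `|` e = setT -> staircase a c `|` e = setT.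
Proof.
move=> ba ce be; apply/seteqP; split => // y _.
have [ey|ney] := pselect (e y); first by right.
have : b y by case: (setU_eqT_cases y be).
rewrite ba => -[m _ amy]; left; exists m => //; split.
  by apply/prefix_unionP; exists m.
by apply/prefix_interP => i _; case: (setU_eqT_cases y (ce i)).
Qed.

Definition rung (r : set Y * set Y) :=
  sigma_union r.1 /\ sigma_union r.2 /\ r.1 `&` r.2 = set0.

(* Countable unions of members of [B] are normal: two of them covering [Y] have
   disjoint complements, which are separated by the sides of a rung. *)
Lemma sigma_union_interpolate e o : sigma_union e -> sigma_union o ->
  e `|` o = setT -> exists r, rung r /\ e `|` r.1 = setT /\ r.2 `|` o = setT.
Proof.
move=> /sigma_union_separated [c [z [Bc [Bz [ec [cz ze]]]]]].
move=> /sigma_union_separated [a [y [Ba [By [oa [ay yo]]]]]] eo.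
exists (staircase a z, staircase c y); split; [|split].
- split; [exact: staircase_sigma|split; [exact: staircase_sigma|]].
  exact: staircase_disjoint.
- by rewrite setUC; apply: staircase_cover oa ze _; rewrite setUC.
- exact: staircase_cover ec yo eo.
Qed.

Definition interpolant (e o : set Y) : set Y * set Y :=
  xget (set0, set0) [set r | rung r /\ e `|` r.1 = setT /\ r.2 `|` o = setT].

Lemma interpolantP e o : sigma_union e -> sigma_union o -> e `|` o = setT ->
  rung (interpolant e o) /\ e `|` (interpolant e o).1 = setT /\
  (interpolant e o).2 `|` o = setT.
Proof.
by move=> Le Lo eo; exact: xgetPex (sigma_union_interpolate Le Lo eo).
Qed.

Section urysohn.
Variables b0 c0 : set Y.
Hypotheses (b0_sigma : sigma_union b0) (c0_sigma : sigma_union c0).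
Hypothesis c0b0 : c0 `|` b0 = setT.

Definition top_rung : set Y * set Y := (b0, set0).

(* [(dyadic_chain n k).1] plays the role of the open set [U_(k/2^n)] of
   Urysohn's lemma and the complement of [(dyadic_chain n k).2] that of its
   closure; level [n.+1] inserts an interpolant between consecutive rungs of
   level [n]. *)
Fixpoint dyadic_chain n : nat -> set Y * set Y :=
  if n is n'.+1 then fun k =>
    if odd k then
      interpolant (dyadic_chain n' k./2).2 (dyadic_chain n' k./2.+1).1
    else dyadic_chain n' k./2
  else fun k => if k == 0%N then interpolant c0 b0 else top_rung.

Lemma dyadic_chain_double n i : dyadic_chain n.+1 i.*2 = dyadic_chain n i.
Proof. by rewrite /= odd_double half_double. Qed.

Lemma dyadic_chain_doubleS n i : dyadic_chain n.+1 i.*2.+1 =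
  interpolant (dyadic_chain n i).2 (dyadic_chain n i.+1).1.
Proof. by rewrite /= odd_double /= uphalf_double. Qed.

Definition dyadic_chain_spec n := dyadic_chain n (2 ^ n) = top_rung /\
  forall k, (k < 2 ^ n)%N -> rung (dyadic_chain n k) /\
    (dyadic_chain n k).2 `|` (dyadic_chain n k.+1).1 = setT.

Lemma dyadic_chainP n : dyadic_chain_spec n.
Proof.
elim: n => [|n [top_n IH]].
  split => // k; rewrite expn0 ltnS leqn0 => /eqP -> /=.
  by have [? [_ ?]] := interpolantP c0_sigma b0_sigma c0b0.
split; first by rewrite expnS mul2n dyadic_chain_double.
have step i : (i < 2 ^ n)%N ->
    let r := interpolant (dyadic_chain n i).2 (dyadic_chain n i.+1).1 in
    rung r /\ (dyadic_chain n i).2 `|` r.1 = setT /\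
    r.2 `|` (dyadic_chain n i.+1).1 = setT.
  move=> i_lt; have [[_ [Le _]] cover] := IH i i_lt; apply: interpolantP => //.
  case: (ltnP i.+1 (2 ^ n)) => [/IH [[] //]|i_ge].
  have -> : i.+1 = 2 ^ n by apply/eqP; rewrite eqn_leq i_ge i_lt.
  by rewrite top_n.
move=> k; have [i [->|->]] := even_or_odd k.
  rewrite expnS mul2n ltn_double => i_lt.
  rewrite dyadic_chain_double dyadic_chain_doubleS.
  by have [_ [? _]] := step i i_lt; split => //; case: (IH i i_lt).
rewrite expnS mul2n ltn_Sdouble => i_lt.
rewrite dyadic_chain_doubleS -doubleS dyadic_chain_double.
by have [? [_ ?]] := step i i_lt.
Qed.

Definition dyadic_open n k := (dyadic_chain n k).1.
Definition dyadic_sep n k := (dyadic_chain n k).2.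

Lemma dyadic_disjoint n k : (k < 2 ^ n)%N ->
  dyadic_open n k `&` dyadic_sep n k = set0.
Proof. by move=> k_lt; have [[_ []]] := (dyadic_chainP n).2 k k_lt. Qed.

Lemma dyadic_cover n k : (k < 2 ^ n)%N ->
  dyadic_sep n k `|` dyadic_open n k.+1 = setT.
Proof. by move=> k_lt; have [] := (dyadic_chainP n).2 k k_lt. Qed.

Lemma dyadic_open_sigma n k : (k <= 2 ^ n)%N -> sigma_union (dyadic_open n k).
Proof.
rewrite leq_eqVlt => /orP [/eqP ->|k_lt].
  by rewrite /dyadic_open (dyadic_chainP n).1.
by have [[]] := (dyadic_chainP n).2 k k_lt.
Qed.

Lemma dyadic_sep_sigma n k : (k < 2 ^ n)%N -> sigma_union (dyadic_sep n k).
Proof. by move=> k_lt; have [[_ []]] := (dyadic_chainP n).2 k k_lt. Qed.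

Lemma dyadic_open_top n : dyadic_open n (2 ^ n) = b0.
Proof. by rewrite /dyadic_open (dyadic_chainP n).1. Qed.

Lemma dyadic_open0 n : dyadic_open n 0 = (interpolant c0 b0).1.
Proof.
by elim: n => // n IH; rewrite /dyadic_open -double0 dyadic_chain_double.
Qed.

Lemma dyadic_openS n k : (k < 2 ^ n)%N ->
  dyadic_open n k `<=` dyadic_open n k.+1.
Proof.
move=> k_lt y ky; case: (setU_eqT_cases y (dyadic_cover k_lt)) => // sy.
by have := (disjoints_subset _ _).1 (dyadic_disjoint k_lt) y ky.
Qed.

Lemma dyadic_open_mono n j k : (j <= k)%N -> (k <= 2 ^ n)%N ->
  dyadic_open n j `<=` dyadic_open n k.
Proof.
elim: k => [|k IH]; first by rewrite leqn0 => /eqP -> _.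
rewrite leq_eqVlt => /orP [/eqP -> _ //|jk k_lt].
exact: subset_trans (IH jk (ltnW k_lt)) (dyadic_openS k_lt).
Qed.

Definition level_pred n y k := (2 ^ n <= k)%N || `[< dyadic_open n k y >].

Lemma level_ex n y : exists k, level_pred n y k.
Proof. by exists (2 ^ n); rewrite /level_pred leqnn. Qed.

(* [level n y] is [2 ^ n] when no open side of level [n] contains [y]. *)
Definition level n y := ex_minn (level_ex n y).

Lemma level_le n y : (level n y <= 2 ^ n)%N.
Proof.
by rewrite /level; case: ex_minnP => m _; apply; rewrite /level_pred leqnn.
Qed.

Lemma level_in n y : (level n y < 2 ^ n)%N -> dyadic_open n (level n y) y.
Proof.
rewrite /level; case: ex_minnP => m /orP [m_ge|/asboolP //] _ m_lt.
by move: (leq_ltn_trans m_ge m_lt); rewrite ltnn.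
Qed.

Lemma level_min n y j : (j < level n y)%N -> ~ dyadic_open n j y.
Proof.
rewrite /level; case: ex_minnP => m _ m_min jm jy.
suff : (m <= j)%N by rewrite leqNgt jm.
by apply: m_min; apply/orP; right; apply/asboolP.
Qed.

Lemma level_leP n y k : (k <= 2 ^ n)%N -> k = 2 ^ n \/ dyadic_open n k y ->
  (level n y <= k)%N.
Proof.
move=> k_le ky; rewrite /level; case: ex_minnP => m _; apply.
rewrite /level_pred.
by case: ky => [->|ky]; [rewrite leqnn|apply/orP; right; apply/asboolP].
Qed.

Lemma level_geP n y k : (k <= 2 ^ n)%N ->
  (forall j, (j < k)%N -> ~ dyadic_open n j y) -> (k <= level n y)%N.
Proof.
move=> k_le ky; rewrite leqNgt; apply/negP => lt_k.
by apply: (ky _ lt_k); apply: level_in; exact: leq_trans lt_k k_le.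
Qed.

Lemma levelS_le n y : (level n.+1 y <= (level n y).*2)%N.
Proof.
have le_top := level_le n y.
apply: level_leP; first by rewrite expnS mul2n leq_double.
case: (ltnP (level n y) (2 ^ n)) => lvl_lt.
  by right; rewrite /dyadic_open dyadic_chain_double; exact: level_in.
by left; rewrite expnS mul2n; congr (_.*2); apply/eqP; rewrite eqn_leq le_top.
Qed.

Lemma levelS_ge n y : ((level n y).*2 <= (level n.+1 y).+1)%N.
Proof.
have le_top := level_le n y.
case lvl: (level n y) le_top => [//|k] k_lt.
rewrite doubleS ltnS; apply: level_geP.
  by rewrite expnS mul2n ltn_double.
move=> j; have [i [->|->]] := even_or_odd j.
  rewrite ltnS leq_double => ik.
  by rewrite /dyadic_open dyadic_chain_double; apply: level_min; rewrite lvl.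
rewrite ltnS ltn_double => ik iy.
apply: (@level_min n y i.+1); first by rewrite lvl ltnS.
rewrite /dyadic_open -(dyadic_chain_double n i.+1) doubleS.
apply: (dyadic_openS _ iy).
by rewrite expnS mul2n ltn_Sdouble (ltn_trans ik k_lt).
Qed.

Local Open Scope R_scope.

Definition approx n y := INR (level n y) * / 2 ^ n.

Lemma approx_bounds n y : 0 <= approx n y <= 1.
Proof.
rewrite /approx; have := inv_pow2_gt0 n; have := pos_INR (level n y).
have : INR (level n y) <= 2 ^ n by rewrite -INR_expn2; apply/INR_leq/level_le.
have : 2 ^ n * / 2 ^ n = 1 by apply: Rinv_r; apply: pow_nonzero; lra.
nra.
Qed.

Lemma approxS n y : approx n.+1 y <= approx n y <= approx n.+1 y + / 2 ^ n.+1.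
Proof.
rewrite /approx inv_pow2S; have := inv_pow2_gt0 n.
have := INR_leq (levelS_le n y); have := INR_leq (levelS_ge n y).
rewrite !INR_double S_INR; nra.
Qed.

Lemma approxD n d y : approx (n + d) y <= approx n y <=
  approx (n + d) y + / 2 ^ n - / 2 ^ (n + d).
Proof.
elim: d => [|d IH]; first by rewrite addn0; lra.
have := approxS (n + d) y; rewrite addnS inv_pow2S; lra.
Qed.

Definition urysohn_fun y := inf (range (approx ^~ y)).

Lemma urysohn_fun_lb c y : (forall n, c <= approx n y) -> c <= urysohn_fun y.
Proof.
move=> c_lb; apply/RleP; apply: lb_le_inf; first by exists (approx 0 y), 0%N.
by move=> _ [m _ <-]; apply/RleP.
Qed.

Lemma urysohn_fun_approx n y :
  approx n y - / 2 ^ n <= urysohn_fun y <= approx n y.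
Proof.
split; last first.
  apply/RleP; apply: ge_inf; last by exists n.
  by exists 0 => _ [m _ <-]; apply/RleP; case: (approx_bounds m y).
apply: urysohn_fun_lb => m; have := inv_pow2_gt0 n.
case: (leqP n m) => nm.
  rewrite -(subnKC nm); have := approxD n (m - n) y.
  have := inv_pow2_gt0 (n + (m - n)); lra.
have := approxD m (n - m) y; rewrite subnKC; [lra|exact: ltnW].
Qed.

(* Near [y], the open side of rung [level n y] bounds levels from above, and
   the separating side of rung [level n y - 2] keeps them from dropping below
   [level n y - 1]. *)
Lemma level_nbhd n y : exists2 A, gen_topology B A &
  A y /\ forall z, A z -> (level n z <= level n y <= (level n z).+1)%N.
Proof.
set k := level n y; have k_le : (k <= 2 ^ n)%N := level_le n y.
pose A1 := if (k < 2 ^ n)%N then dyadic_open n k else setT.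
pose A2 := if (1 < k)%N then dyadic_sep n (k - 2) else setT.
have sep_lt : (1 < k)%N -> (k - 2 < 2 ^ n)%N by lia.
exists (A1 `&` A2); [|split; [split|]].
- apply: gen_topologyI; [rewrite /A1|rewrite /A2]; case: ifP => k_ineq;
    try exact: gen_topologyT; apply: sigma_union_open.
    exact: dyadic_open_sigma (ltnW k_ineq).
  exact: dyadic_sep_sigma (sep_lt k_ineq).
- by rewrite /A1; case: ifP => // k_lt; exact: level_in.
- rewrite /A2; case: ifP => // k_gt.
  case: (setU_eqT_cases y (dyadic_cover (sep_lt k_gt))) => // ky.
  by exfalso; apply: (@level_min n y (k - 2).+1 _ ky); rewrite -/k; lia.
move=> z [A1z A2z]; apply/andP; split.
  apply: level_leP => //; move: A1z; rewrite /A1; case: ifP => k_lt kz.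
    by right.
  by left; apply/eqP; rewrite eqn_leq k_le leqNgt k_lt.
case: (ltnP 1 k) => k_gt; last exact: leq_trans k_gt _.
suff : (k - 1 <= level n z)%N by lia.
apply: level_geP => [|j jk jz]; first by lia.
move: A2z; rewrite /A2 k_gt => sz.
have jk2 : (j <= k - 2)%N by lia.
have zk := dyadic_open_mono jk2 (ltnW (sep_lt k_gt)) jz.
exact: (disjoints_subset _ _).1 (dyadic_disjoint (sep_lt k_gt)) z zk sz.
Qed.

Lemma urysohn_fun_nbhd y e : 0 < e -> exists2 A, gen_topology B A &
  A y /\ forall z, A z -> Rabs (urysohn_fun z - urysohn_fun y) < e.
Proof.
move=> e_gt0; have [n n_small] := @inv_pow2_small (e / 2) ltac:(lra).
have [A oA [Ay Alevel]] := level_nbhd n y.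
exists A => //; split => // z /Alevel /andP [zy yz].
have := INR_leq zy; have := INR_leq yz; rewrite S_INR.
have := urysohn_fun_approx n z; have := urysohn_fun_approx n y.
rewrite /approx; have := inv_pow2_gt0 n => ? ? ? ? ?.
by apply: Rabs_def1; nra.
Qed.

Lemma urysohn_fun_continuous A : open A -> gen_topology B (urysohn_fun @^-1` A).
Proof.
move=> oA; apply: gen_topology_local => y /= /(open_Rabs_ball oA) [e e_gt0 eA].
have [S oS [Sy Sclose]] := urysohn_fun_nbhd y e_gt0.
by exists S => //; split => // z /Sclose /eA.
Qed.

Lemma urysohn_fun_bounds y : 0 <= urysohn_fun y <= 1.
Proof.
split; first by apply: urysohn_fun_lb => n; case: (approx_bounds n y).
by have := urysohn_fun_approx 0 y; have := approx_bounds 0 y; lra.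
Qed.

Lemma urysohn_fun_eq0 y : ~ c0 y -> urysohn_fun y = 0.
Proof.
move=> c0y; have approx0 n : approx n y = 0.
  rewrite /approx; have -> : level n y = 0%N; last by rewrite /=; lra.
  apply/eqP; rewrite -leqn0; apply: level_leP => //.
  right; rewrite dyadic_open0.
  have [_ [cover _]] := interpolantP c0_sigma b0_sigma c0b0.
  by case: (setU_eqT_cases y cover).
have : 0 <= urysohn_fun y by apply: urysohn_fun_lb => n; rewrite approx0; lra.
by have := urysohn_fun_approx 0 y; rewrite approx0; lra.
Qed.

Lemma urysohn_fun_eq1 y : ~ b0 y -> urysohn_fun y = 1.
Proof.
move=> b0y; have approx1 n : approx n y = 1.
  rewrite /approx; have -> : level n y = (2 ^ n)%N.
    apply/eqP; rewrite eqn_leq level_le /=; apply: level_geP => // j j_lt jy.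
    apply: b0y; rewrite -(dyadic_open_top n).
    exact: dyadic_open_mono (ltnW j_lt) _ _ jy.
  by rewrite INR_expn2; apply: Rinv_r; apply: pow_nonzero; lra.
have : 1 <= urysohn_fun y by apply: urysohn_fun_lb => n; rewrite approx1; lra.
by have := urysohn_fun_approx 0 y; rewrite approx1; lra.
Qed.

End urysohn.

Lemma gen_topology_completely_regular : completely_regular (gen_topology B).
Proof.
move=> F p oF Fp; case: (gen_topology_basis BI oF) => [FT|basis].
  exists (fun=> R0); split; [|split; [|split]] => //.
  - move=> A _; apply: gen_topology_local => y A0.
    by exists setT; [exact: gen_topologyT|split].
  - by move=> y /=; lra.
  - by move=> y Fy; exfalso; have : (~` F) y by rewrite FT.
have [b [Bb [bp bF]]] := basis p Fp.
have [u [v [_ [Bv [bu [uv vb]]]]]] := B_separated Bb.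
have [m _ ump] : (\bigcup_n u n) p by rewrite -bu.
have [Lb Lv] := (sigma_union_of Bb, sigma_union_of (Bv m)).
exists (urysohn_fun b (v m)); split; [|split; [|split]].
- exact: urysohn_fun_continuous.
- exact: urysohn_fun_bounds.
- exact/(urysohn_fun_eq0 Lb Lv (vb m))/((disjoints_subset _ _).1 (uv m) p ump).
- by move=> y Fy; apply: (urysohn_fun_eq1 Lb Lv (vb m)) => /bF.
Qed.

End sigma_lattice.

Section quotient.
Variables (X : topologicalType) (P : set (set X)).

Lemma qmap_eq x y : qmap P x = qmap P y -> forall V, P V -> (V x <-> V y).
Proof.
move=> /(congr1 sval) /= xy V PV.
have : cls P y y by move=> W _.
by rewrite -xy => /(_ V PV).
Qed.

Lemma qmap_surj z : exists x, qmap P x = z.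
Proof.
case: z => A [x Ax]; exists x; rewrite /qmap; subst A.
by congr exist; exact: Prop_irrelevance.
Qed.

Lemma qmap_imageK V : P V -> qmap P @^-1` (qmap P @` V) = V.
Proof.
move=> PV; apply/seteqP; split => [x [x' Vx' x'x]|x Vx]; last by exists x.
exact: (qmap_eq x'x PV).1.
Qed.

Lemma qmap_imageI U V : P V ->
  qmap P @` U `&` qmap P @` V = qmap P @` (U `&` V).
Proof.
move=> PV; apply/seteqP; split => [z [[x Ux <-] [y Vy yx]]|z [x [Ux Vx] <-]].
  by exists x => //; split => //; exact: (qmap_eq yx PV).1.
by split; exists x.
Qed.

Definition qbasis := [set qmap P @` V | V in P].

Hypothesis P_ring : ring_of_open_sets P.

Lemma qbasisI a b : qbasis a -> qbasis b -> qbasis (a `&` b).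
Proof.
case=> U PU <- [V PV <-]; rewrite qmap_imageI //.
by exists (U `&` V) => //; apply: P_ring.2.2.
Qed.

Lemma qbasisU a b : qbasis a -> qbasis b -> qbasis (a `|` b).
Proof.
case=> U PU <- [V PV <-]; rewrite -image_setU.
by exists (U `|` V) => //; apply: P_ring.2.1.
Qed.

Lemma qmap_continuous W : QP_topology P W -> open (qmap P @^-1` W).
Proof.
move=> oW; apply: (oW (fun W => open (qmap P @^-1` W))).
- split; [|split].
  + by rewrite preimage_setT; exact: openT.
  + by move=> A C oA oC; rewrite preimage_setI; exact: openI.
  + by move=> F oF; rewrite preimage_bigcup; exact: bigcup_open.
- by move=> _ [V PV <-]; rewrite qmap_imageK //; exact: P_ring.1.
Qed.

Lemma QP_open_refine W V x : P V -> V x -> QP_topology P W -> W (qmap P x) ->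
  exists V', [/\ P V', V' `<=` V, V' x & qmap P @` V' `<=` W].
Proof.
move=> PV Vx oW Wx; case: (gen_topology_basis qbasisI oW) => [WT|basis].
  by exists V; split => //; rewrite WT.
have [_ [[V'' PV'' <-] [[x'' V''x'' x''x] V''W]]] := basis _ Wx.
exists (V `&` V''); split.
- exact: P_ring.2.2.
- exact: subIsetl.
- by split => //; exact: (qmap_eq x''x PV'').1.
- by move=> _ [y [_ V''y] <-]; apply: V''W; exists y.
Qed.

Lemma qmap_image_closure V U : P V ->
  (forall W, P W -> W !=set0 -> W `<=` V -> W `&` U !=set0) ->
  qmap P @` V `<=` closure_in (QP_topology P) (qmap P @` U).
Proof.
move=> PV VU _ [x Vx <-] W oW Wx.
have [V' [PV' V'V V'x V'W]] := QP_open_refine PV Vx oW Wx.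
have [y [V'y Uy]] := VU V' PV' (ex_intro _ x V'x) V'V.
by exists (qmap P y); split; [apply: V'W|]; exists y.
Qed.

Hypothesis P_seq : P `<=` Pseq P.

Lemma qbasis_separated b : qbasis b -> separated_union qbasis b.
Proof.
case=> W /P_seq [U [V [PU [PV [UV UW]]]]] <-.
exists (fun n => qmap P @` U n), (fun n => qmap P @` V n).
split; [|split; [|split; [|split]]].
- by move=> n; exists (U n).
- by move=> n; exists (V n).
- by rewrite -UW image_bigcup.
- move=> n; rewrite qmap_imageI //; apply/seteqP; split => // z [x [Ux Vx] _].
  exact: (UV n).1 x Ux Vx.
- move=> n; apply/seteqP; split => // z _; have [x <-] := qmap_surj z.
  have [Vx|nVx] := pselect (V n x); first by left; exists x.
  by right; exists x => //; rewrite -UW; exists n.+1 => //; apply: (UV n).2.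
Qed.

Lemma QP_completely_regular : completely_regular (QP_topology P).
Proof.
exact: gen_topology_completely_regular qbasisI qbasisU qbasis_separated.
Qed.

End quotient.

Section open_open_game.
Variables (X : topologicalType) (sigma : seq (set X) -> set X).

Fixpoint responses (respond : set X -> set X) n : seq (set X) :=
  if n is n'.+1 then
    rcons (responses respond n') (respond (sigma (responses respond n')))
  else [::].

Lemma responses_iota respond n :
  responses respond n =
  [seq respond (sigma (responses respond i)) | i <- iota 0 n].
Proof.
elim: n => // n IH.
by rewrite -[in RHS]addn1 iotaD map_cat -IH add0n cats1.
Qed.

Variable P : set (set X).
Hypothesis P_open : forall V, P V -> open V.
Hypothesis sigma_win : winning_strategyI sigma.
Hypothesis sigma_P : closed_under P sigma.

Lemma strategy_stays_in s : (forall W, W \in s -> P W /\ W !=set0) ->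
  P (sigma s) /\ sigma s !=set0.
Proof.
move=> sP; split.
  by case: s sP => [_|W s sP]; [exact: sigma_P.1|exact: sigma_P.2].
case: (sigma_win.1 s) => // W /sP [PW W0]; split => //; exact: P_open.
Qed.

Lemma winning_strategy_basic_dense U : open U -> U !=set0 -> exists V,
  [/\ P V, V !=set0 & forall W, P W -> W !=set0 -> W `<=` V -> W `&` U !=set0].
Proof.
move=> oU U0; apply: contrapT => noV.
have /choice [respond respondP] : forall V, exists W, P V -> V !=set0 ->
    [/\ P W, W !=set0, W `<=` V & ~ (W `&` U !=set0)].
  move=> V; have [[PV V0]|nV] := pselect (P V /\ V !=set0); last first.
    by exists V => PV V0; exfalso; apply: nV.
  suff [W ?] : exists W, [/\ P W, W !=set0, W `<=` V & ~ (W `&` U !=set0)].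
    by exists W.
  apply: contrapT => noW; apply: noV; exists V; split => // W PW W0 WV.
  by apply: contrapT => WU; apply: noW; exists W.
pose A n := sigma (responses respond n).
have A_in n : P (A n) /\ A n !=set0.
  apply: strategy_stays_in; elim: n => // n IH W.
  rewrite mem_rcons inE => /orP [/eqP ->|/IH //].
  by have [PA A0] := strategy_stays_in IH; case: (respondP _ PA A0).
have play : play_by sigma A (fun n => respond (A n)).
  split => //; split => n; first by rewrite /A responses_iota.
  have [PA A0] := A_in n; case: (respondP _ PA A0) => PW W0 WA _.
  by split => //; split => //; exact: P_open.
have [y [Uy [n _ yB]]] := sigma_win.2 _ _ play U U0 oU.
have [PA A0] := A_in n; case: (respondP _ PA A0) => _ _ _; apply.
by exists y.
Qed.

End open_open_game.

Theorem theorem7 (X : topologicalType) (P : set (set X)) :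
  ring_of_open_sets P ->
  (exists sigma, winning_strategyI sigma /\ closed_under P sigma) ->
  P `<=` Pseq P ->
  completely_regular (QP_topology P) /\ skeletal (QP_topology P) (qmap P).
Proof.
move=> P_ring [sigma [sigma_win sigma_P]] P_seq.
split; first exact: QP_completely_regular.
split; first exact: qmap_continuous.
split=> [z|U oU U0]; first exact: qmap_surj.
have [V [PV [v Vv] VU]] :=
  winning_strategy_basic_dense P_ring.1 sigma_win sigma_P oU U0.
exists (qmap P v), (qmap P @` V); last by exists v.
by split; [apply: gen_topology_sub; exists V|exact: qmap_image_closure].
Qed.
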